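(* For all $g,g'\in\mathbb R$ and all $p,q\in\Delta_d^{\mathcal S}$, \[ \ell^\Theta_{\mathrm C,\infty}\bigl(\mathcal G_g(p),\mathcal G_{g'}(q)\bigr)\le\ell^\Theta_{\mathrm C,\infty}(p,q)+\Delta^{-1/2}|g-g'|. \]
   Context: Finite state set $\mathcal S=\{1,\dots,m\}$ with a transition matrix $P=(P_{ij})$ (induced by a fixed policy in a finite MDP). $R_{ij}$ is the finite-valued $[0,1]$-valued random one-step reward conditioned on transition $i\to j$; $\nu^{(g)}_{ij}:=\mathrm{Law}(R_{ij}-g)$. $\Theta=\{\theta_1<\dots<\theta_d\}$ with constant stride $\Delta>0$; $\Delta_d$ the probability simplex of $\mathbb R^d$; $\Delta_d^{\mathcal S}$ families $(p_i)_{i\in\mathcal S}$, $p_i\in\Delta_d$. For $u\in\Delta_d$, $\eta^{u,0}:=\sum_ku_k\delta_{\theta_k}$. Categorical projection $\Pi^\Theta_{\mathrm C}$: $\delta_x\mapsto\delta_{\theta_1}$ if $x\le\theta_1$, $\delta_{\theta_d}$ if $x\ge\theta_d$, $\frac{\theta_{k+1}-x}{\Delta}\delta_{\theta_k}+\frac{x-\theta_k}{\Delta}\delta_{\theta_{k+1}}$ if $\theta_k\le x\le\theta_{k+1}$, extended linearly to laws. $\mathcal G_g(p)$ is the unique $q\in\Delta_d^{\mathcal S}$ with $\eta^{q_i,0}=\Pi^\Theta_{\mathrm C}(\sum_jP_{ij}(\nu^{(g)}_{ij}\ast\eta^{p_j,0}))$ for all $i$. Coordinate Cramér metric: $F_u(\theta_k):=\sum_{j\le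 k}u_j$, $\ell^\Theta_{\mathrm C}(u,v)^2:=\Delta\sum_{k=1}^{d-1}(F_u(\theta_k)-F_v(\theta_k))^2$, $\ell^\Theta_{\mathrm C,\infty}(p,q):=\max_i\ell^\Theta_{\mathrm C}(p_i,q_i)$. *)

(* Real scalars: an arbitrary real closed field R (rcfType),
   which covers the reals and provides Num.sqrt. *)
From HB Require Import structures.
From mathcomp Require Import all_boot all_order all_algebra.
Set Implicit Arguments. Unset Strict Implicit. Unset Printing Implicit Defensive.
Import Order.TTheory GRing.Theory Num.Theory.
Local Open Scope ring_scope.

Section Defs.
Variable R : rcfType.

(* Support grid: theta_(k) = theta1 + k * Delta  (0-based index k), so the
   grid has constant stride Delta; the paper's theta_1 is th theta1 Delta 0. *)
Definition th (theta1 Delta : R) (k : nat) : R := theta1 + k%:R * Delta.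

(* Categorical projection of the Dirac mass delta_x : weight put on the atom
   theta_(l), l : 'I_d (0-based), following the paper's three cases. *)
Definition cproj (d : nat) (theta1 Delta x : R) (l : 'I_d) : R :=
  let t := th theta1 Delta in
  if x <= t 0%N then (nat_of_ord l == 0%N)%:R
  else if t d.-1 <= x then (nat_of_ord l == d.-1)%:R
  else (if (t l <= x) && (x < t l.+1) then (t l.+1 - x) / Delta else 0)
     + (if (0 < nat_of_ord l)%N && (t l.-1 < x) && (x < t l)
        then (x - t l.-1) / Delta else 0).

Definition simplex (d : nat) (u : 'I_d -> R) : Prop :=
  (forall k, 0 <= u k) /\ \sum_(k < d) u k = 1.

(* The transition i -> j has probability P i j; the reward R_ij is finitely
   valued: it takes value rv i j a with probability rw i j a (a : 'I_n).
   G_g(p)_i is the coordinate vector of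
     Pi_C ( sum_j P_ij ( Law(R_ij - g) * sum_k p_jk delta_theta_k ) ),
   computed by linearity of Pi_C:  the mixture puts mass
   P_ij * rw_ija * p_jk on the point rv_ija - g + theta_k. *)
Definition Gop (m d n : nat) (P : 'M[R]_m) (rv rw : 'I_m -> 'I_m -> 'I_n -> R)
  (theta1 Delta g : R) (p : 'I_m -> 'I_d -> R) : 'I_m -> 'I_d -> R :=
  fun i l => \sum_(j < m) P i j * \sum_(a < n) rw i j a *
      \sum_(k < d) p j k * cproj theta1 Delta (rv i j a - g + th theta1 Delta k) l.

Definition cdf (d : nat) (u : 'I_d -> R) (k : 'I_d) : R :=
  \sum_(j < d | (nat_of_ord j <= nat_of_ord k)%N) u j.

(* Coordinate Cramer metric: sum over k = 1..d-1 (paper), i.e. 0-based k < d-1. *)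
Definition cramer (d : nat) (Delta : R) (u v : 'I_d -> R) : R :=
  Num.sqrt (Delta * \sum_(k < d | (nat_of_ord k < d.-1)%N) (cdf u k - cdf v k) ^+ 2).

(* Sup version over states (max of nonnegative numbers; 0 if m = 0). *)
Definition cramer_inf (m d : nat) (Delta : R) (p q : 'I_m -> 'I_d -> R) : R :=
  \big[Num.max/0]_(i < m) cramer Delta (p i) (q i).

End Defs.

From HB Require Import structures.
From mathcomp Require Import all_boot all_order all_algebra.
From mathcomp Require Import lra ring.
Set Implicit Arguments. Unset Strict Implicit. Unset Printing Implicit Defensive.
Import Order.TTheory GRing.Theory Num.Theory.
Local Open Scope ring_scope.

(* In grid units u = (x - theta_1) / Delta, the CDF of the projected Dirac mass
   at u is k |-> ramp k.+1 u, so the CDF of G_g(p)_i at atom k is a mixture,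
   over transitions j with reward value r, of sum_l p_jl ramp k.+1 (s + l) with
   shift s = (r - g) / Delta.  Split the difference of the two CDFs into a
   change of distribution (p to q, same shift) and a change of shift (g to g').
   Summation by parts writes the first as a doubly substochastic matrix of ramp
   increments applied to the CDF difference of p_j and q_j, so the Schur test
   bounds it in l2 by that difference.  The second is at most |g - g'| / Delta
   in l2, because the ramps of consecutive atoms add up to a 1-Lipschitz clamp.
   Mixing does not increase squared l2 norms (Jensen), and the triangle
   inequality in l2 followed by rescaling by sqrt Delta gives the bound. *)

Section SquareSums.
Variable R : realFieldType.
Implicit Types (I J : finType).

Lemma weighted_cauchy_schwarz I (P : pred I) (mu x y : I -> R) :
  (forall i, P i -> 0 <= mu i) ->
  (\sum_(i | P i) mu i * x i * y i) ^+ 2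
    <= (\sum_(i | P i) mu i * x i ^+ 2) * (\sum_(i | P i) mu i * y i ^+ 2).
Proof.
move=> mu_ge0.
set A := \sum_(i | P i) _ * x i ^+ 2; set B := \sum_(i | P i) _ * y i ^+ 2.
set C := \sum_(i | P i) _ * y i.
have sum_prod (f h : I -> R) :
    \sum_(i | P i) \sum_(j | P j) f i * h j = (\sum_(i | P i) f i) * (\sum_(j | P j) h j).
  by rewrite big_distrl; apply: eq_bigr => i _; rewrite big_distrr.
have lagrange : \sum_(i | P i) \sum_(j | P j)
    mu i * mu j * (x i * y j - x j * y i) ^+ 2 = A * B + B * A - 2 * C ^+ 2.
  rewrite expr2 -!sum_prod mulr_sumr -big_split -sumrB /=.
  apply: eq_bigr => i _; rewrite mulr_sumr -big_split -sumrB /=.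
  by apply: eq_bigr => j _; ring.
have : 0 <= \sum_(i | P i) \sum_(j | P j) mu i * mu j * (x i * y j - x j * y i) ^+ 2.
  by apply: sumr_ge0 => i Pi; apply: sumr_ge0 => j Pj;
     rewrite mulr_ge0 ?sqr_ge0 ?mulr_ge0 ?mu_ge0.
rewrite lagrange; lra.
Qed.

Lemma jensen_sqr I (P : pred I) (mu x : I -> R) :
  (forall i, P i -> 0 <= mu i) -> \sum_(i | P i) mu i <= 1 ->
  (\sum_(i | P i) mu i * x i) ^+ 2 <= \sum_(i | P i) mu i * x i ^+ 2.
Proof.
move=> mu_ge0 mu_le1.
have := weighted_cauchy_schwarz x (fun=> 1) mu_ge0.
under eq_bigr do rewrite mulr1.
under [X in _ * X]eq_bigr do rewrite expr1n mulr1.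
have : 0 <= \sum_(i | P i) mu i * x i ^+ 2.
  by apply: sumr_ge0 => i Pi; rewrite mulr_ge0 ?sqr_ge0 ?mu_ge0.
nra.
Qed.

Lemma minkowski_sqr I (P : pred I) (a b : I -> R) (A B : R) :
  0 <= A -> 0 <= B ->
  \sum_(i | P i) a i ^+ 2 <= A ^+ 2 -> \sum_(i | P i) b i ^+ 2 <= B ^+ 2 ->
  \sum_(i | P i) (a i + b i) ^+ 2 <= (A + B) ^+ 2.
Proof.
move=> A_ge0 B_ge0 a_le b_le.
have := @weighted_cauchy_schwarz _ P (fun=> 1) a b (fun _ _ => ler01).
under eq_bigr do rewrite mul1r.
under [X in _ <= X * _]eq_bigr do rewrite mul1r.
under [X in _ <= _ * X]eq_bigr do rewrite mul1r.
have -> : \sum_(i | P i) (a i + b i) ^+ 2 =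
    \sum_(i | P i) a i ^+ 2 + \sum_(i | P i) b i ^+ 2 + 2 * \sum_(i | P i) a i * b i.
  by rewrite mulr_sumr -!big_split; apply: eq_bigr => i _ /=; ring.
set Sa := \sum_(i | P i) a i ^+ 2 in a_le *; set Sb := \sum_(i | P i) b i ^+ 2 in b_le *.
set Sab := \sum_(i | P i) a i * b i => cs.
have Sa_ge0 : 0 <= Sa by apply: sumr_ge0 => i _; exact: sqr_ge0.
have Sb_ge0 : 0 <= Sb by apply: sumr_ge0 => i _; exact: sqr_ge0.
have AB_ge0 : 0 <= A * B by exact: mulr_ge0.
have : Sab ^+ 2 <= (A * B) ^+ 2.
  by apply: (le_trans cs); rewrite exprMn ler_pM // sqr_ge0.
rewrite !expr2 => Sab_sqr_le; nra.
Qed.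

Lemma sum_sqr_mixture_le I J (Q : pred J) (w : I -> R) (X : I -> J -> R) (B : R) :
  (forall i, 0 <= w i) -> \sum_i w i = 1 ->
  (forall i, \sum_(k | Q k) X i k ^+ 2 <= B) ->
  \sum_(k | Q k) (\sum_i w i * X i k) ^+ 2 <= B.
Proof.
move=> w_ge0 w_sum1 X_le.
apply: (@le_trans _ _ (\sum_(k | Q k) \sum_i w i * X i k ^+ 2)).
  by apply: ler_sum => k _; apply: jensen_sqr; rewrite ?w_sum1.
rewrite exchange_big /= -[B]mul1r -w_sum1 mulr_suml.
by apply: ler_sum => i _; rewrite -mulr_sumr ler_wpM2l.
Qed.

Lemma schur_test_sqr I J (P : pred I) (Q : pred J) (b : I -> J -> R) (W : J -> R) :
  (forall i j, P i -> Q j -> 0 <= b i j) ->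
  (forall i, P i -> \sum_(j | Q j) b i j <= 1) ->
  (forall j, Q j -> \sum_(i | P i) b i j <= 1) ->
  \sum_(i | P i) (\sum_(j | Q j) b i j * W j) ^+ 2 <= \sum_(j | Q j) W j ^+ 2.
Proof.
move=> b_ge0 rows_le1 cols_le1.
apply: (@le_trans _ _ (\sum_(i | P i) \sum_(j | Q j) b i j * W j ^+ 2)).
  by apply: ler_sum => i Pi; apply: jensen_sqr => [j Qj|]; [exact: b_ge0 | exact: rows_le1].
rewrite exchange_big /=; apply: ler_sum => j Qj.
by rewrite -mulr_suml ler_piMl ?sqr_ge0 ?cols_le1.
Qed.

Lemma sum_sqr_le_sqr_sum I (P : pred I) (v : I -> R) :
  (forall i, P i -> 0 <= v i) ->
  \sum_(i | P i) v i ^+ 2 <= (\sum_(i | P i) v i) ^+ 2.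
Proof.
move=> v_ge0.
suff [] : 0 <= \sum_(i | P i) v i /\
          \sum_(i | P i) v i ^+ 2 <= (\sum_(i | P i) v i) ^+ 2 by [].
elim/big_rec2: _ => [|i s t Pi [s_ge0 t_le]]; first by rewrite expr0n lexx.
have := v_ge0 i Pi; move: t_le; rewrite !expr2; split; nra.
Qed.

End SquareSums.

Section Ramp.
Variable R : realFieldType.
Implicit Types (a b x y u : R).

Definition clamp a b x : R := if x <= a then a else if b <= x then b else x.

Definition ramp (k : nat) u : R := clamp 0 1 (k%:R - u).

Lemma clamp_ge a b x : a <= b -> a <= clamp a b x.
Proof. by rewrite /clamp => ab; case: ifP => ?; [|case: ifP => ?]; lra. Qed.

Lemma clamp_le a b x : a <= b -> clamp a b x <= b.
Proof. by rewrite /clamp => ab; case: ifP => ?; [|case: ifP => ?]; lra. Qed.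

Lemma clamp_lipschitz a b x y : a <= b -> x <= y ->
  0 <= clamp a b y - clamp a b x <= y - x.
Proof.
rewrite /clamp => ab xy.
by do 4 (try case: ifP => ?); apply/andP; split; lra.
Qed.

Lemma ramp_ge0 k u : 0 <= ramp k u.
Proof. exact: clamp_ge. Qed.

Lemma ramp_le1 k u : ramp k u <= 1.
Proof. exact: clamp_le. Qed.

Lemma ler_ramp k u u' : u' <= u -> ramp k u <= ramp k u'.
Proof.
move=> le_u'u; have le_arg : k%:R - u <= k%:R - u' by lra.
by have /andP[+ _] := clamp_lipschitz ler01 le_arg; rewrite subr_ge0.
Qed.

Lemma rampS_addr1 k u : ramp k.+1 (u + 1) = ramp k u.
Proof. by rewrite /ramp -natr1; congr clamp; ring. Qed.

Lemma sum_ramp K u : \sum_(k < K) ramp k.+1 u = K%:R - clamp 0 K%:R u.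
Proof.
elim: K => [|K IH]; first by rewrite big_ord0 /clamp; do 2 (try case: ifP => ?); lra.
rewrite big_ord_recr /= IH /ramp /clamp -!natr1.
have K_ge0 : 0 <= K%:R :> R by exact: ler0n.
by do 6 (try case: ifP => ?); lra.
Qed.

Lemma sum_sqr_rampB_le K u u' :
  \sum_(k < K) (ramp k.+1 u - ramp k.+1 u') ^+ 2 <= (u - u') ^+ 2.
Proof.
wlog le_uu' : u u' / u <= u'.
  move=> wlog_le; have [|/ltW] := leP u u'; first exact: wlog_le.
  move=> /wlog_le; under eq_bigr do rewrite -sqrrN opprB.
  by rewrite -sqrrN opprB.
apply: le_trans (sum_sqr_le_sqr_sum _) _ => [k _|].
  by rewrite subr_ge0 ler_ramp.
rewrite sumrB !sum_ramp.
have /andP[clamp_ge clamp_le] := @clamp_lipschitz 0 K%:R u u' (ler0n _ _) le_uu'.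
rewrite -[(u - u') ^+ 2]sqrrN opprB ler_sqr ?nnegrE; lra.
Qed.

End Ramp.

Section CategoricalProjection.
Variables (R : rcfType) (theta1 Delta : R).
Hypothesis Delta_gt0 : 0 < Delta.

Let grid x := (x - theta1) / Delta.

Lemma th_le n x : (th theta1 Delta n <= x) = (n%:R <= grid x).
Proof. by rewrite ler_pdivlMr // /th; apply/idP/idP; lra. Qed.

Lemma th_lt n x : (th theta1 Delta n < x) = (n%:R < grid x).
Proof. by rewrite ltr_pdivlMr // /th; apply/idP/idP; lra. Qed.

Lemma le_th n x : (x <= th theta1 Delta n) = (grid x <= n%:R).
Proof. by rewrite ler_pdivrMr // /th; apply/idP/idP; lra. Qed.

Lemma lt_th n x : (x < th theta1 Delta n) = (grid x < n%:R).
Proof. by rewrite ltr_pdivrMr // /th; apply/idP/idP; lra. Qed.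

Lemma th_subr_div n x : (th theta1 Delta n - x) / Delta = n%:R - grid x.
Proof. by rewrite /grid /th; field; exact: lt0r_neq0. Qed.

Lemma subr_th_div n x : (x - th theta1 Delta n) / Delta = grid x - n%:R.
Proof. by rewrite /grid /th; field; exact: lt0r_neq0. Qed.

Definition ramp0 (n : nat) (u : R) : R := if n is 0 then 0 else ramp n u.

Lemma cproj_rampE K x (l : 'I_K.+1) : (l < K)%N ->
  cproj theta1 Delta x l = ramp0 l.+1 (grid x) - ramp0 l (grid x).
Proof.
case: l => l lt_lK1 /= lt_lK.
rewrite /cproj /= le_th !th_le !lt_th !th_lt th_subr_div subr_th_div (ltn_eqF lt_lK).
have : l.+1%:R <= K%:R :> R by rewrite ler_nat.
move: (grid x) => u; rewrite /ramp0 /ramp /clamp.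
case: l {lt_lK1 lt_lK} => [|l] /=; rewrite -?[l.+2%:R]natr1 -?[l.+1%:R]natr1 => le_lK.
  by do 6 (try case: ifP => ?); lra.
have l_ge0 : 0 <= l%:R :> R by exact: ler0n.
by do 12 (try case: ifP => ?); lra.
Qed.

Lemma cdf_cproj K x (k : 'I_K.+1) : (k < K)%N ->
  cdf (cproj theta1 Delta x) k = ramp k.+1 (grid x).
Proof.
move=> lt_kK; pose F l := ramp0 l.+1 (grid x) - ramp0 l (grid x).
have -> : cdf (cproj theta1 Delta x) k = \sum_(l < k.+1) F l.
  rewrite (big_ord_widen K.+1 F) ?ltn_ord //; apply: eq_bigr => l le_lk.
  by apply: cproj_rampE; exact: leq_ltn_trans le_lk lt_kK.
by rewrite -(big_mkord xpredT F) telescope_sumr // /F subr0.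
Qed.

End CategoricalProjection.

Section ShiftedProjection.
Variable R : rcfType.
Variable K : nat.
Implicit Types (u v : 'I_K.+1 -> R) (s : R).

(* CDF at atom k of the projection of eta^u translated by s Delta. *)
Definition proj_cdf u s (k : nat) : R := \sum_(l < K.+1) u l * ramp k.+1 (s + l%:R).

Lemma ramp_telescope k s (l : nat) : (l <= K)%N ->
  ramp k (s + l%:R) = ramp k (s + K%:R)
    + \sum_(l' < K.+1 | ((l <= l') && (l' < K))%N)
        (ramp k (s + l'%:R) - ramp k (s + l'.+1%:R)).
Proof.
move=> le_lK; pose f i := - ramp k (s + i%:R).
have -> : \sum_(l' < K.+1 | ((l <= l') && (l' < K))%N)
    (ramp k (s + l'%:R) - ramp k (s + l'.+1%:R)) = \sum_(l <= i < K) (f i.+1 - f i).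
  rewrite big_geq_mkord (big_ord_widen_cond K.+1 _ (fun i => f i.+1 - f i)) //.
  by apply: eq_big => // i _; rewrite /f opprK addrC.
by rewrite telescope_sumr // /f; ring.
Qed.

Lemma proj_cdfB u v s (k : nat) : \sum_l u l = \sum_l v l ->
  proj_cdf u s k - proj_cdf v s k =
  \sum_(l < K.+1 | (l < K)%N)
     (ramp k.+1 (s + l%:R) - ramp k.+1 (s + l.+1%:R)) * (cdf u l - cdf v l).
Proof.
move=> sum_uv; rewrite /proj_cdf -sumrB.
under eq_bigr => l _ do rewrite -mulrBl (ramp_telescope _ _ (ltn_ord l)) mulrDr.
rewrite big_split /= -mulr_suml sumrB sum_uv subrr mul0r add0r.
under eq_bigr do rewrite mulr_sumr.
rewrite (exchange_big_dep (fun l' : 'I_K.+1 => (l' < K)%N)) /= => [|l l' _ /andP[] //].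
apply: eq_bigr => l' lt_l'K; rewrite /cdf -sumrB mulr_sumr.
by apply: eq_big => [l|l _]; rewrite ?lt_l'K ?andbT // mulrC.
Qed.

Lemma sum_rampB_row k s :
  \sum_(l < K.+1 | (l < K)%N) (ramp k.+1 (s + l%:R) - ramp k.+1 (s + l.+1%:R)) <= 1.
Proof.
have := ramp_telescope k.+1 s (leq0n K); rewrite addr0.
under eq_bigl do rewrite leq0n /=.
have := ramp_le1 k.+1 s; have := ramp_ge0 k.+1 (s + K%:R); lra.
Qed.

Lemma sum_rampB_col (l : nat) s :
  \sum_(k < K.+1 | (k < K)%N) (ramp k.+1 (s + l%:R) - ramp k.+1 (s + l.+1%:R)) <= 1.
Proof.
pose F k := ramp k.+1 (s + l%:R) - ramp k (s + l%:R).
have -> : \sum_(k < K.+1 | (k < K)%N)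
    (ramp k.+1 (s + l%:R) - ramp k.+1 (s + l.+1%:R)) = \sum_(k < K) F k.
  rewrite (big_ord_widen K.+1 F) //; apply: eq_bigr => k _.
  by rewrite /F -natr1 addrA rampS_addr1.
rewrite -(big_mkord xpredT F) telescope_sumr //.
have := ramp_le1 K (s + l%:R); have := ramp_ge0 0 (s + l%:R); lra.
Qed.

Lemma proj_cdf_sqdist_le u v s : \sum_l u l = \sum_l v l ->
  \sum_(k < K.+1 | (k < K)%N) (proj_cdf u s k - proj_cdf v s k) ^+ 2
    <= \sum_(k < K.+1 | (k < K)%N) (cdf u k - cdf v k) ^+ 2.
Proof.
move=> sum_uv; under eq_bigr do rewrite proj_cdfB //.
apply: schur_test_sqr => [k l _ _|k _|l _].
- by rewrite subr_ge0 ler_ramp // -natr1; lra.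
- exact: sum_rampB_row.
- exact: sum_rampB_col.
Qed.

Lemma proj_cdf_shift_sqdist_le u s s' : simplex u ->
  \sum_(k < K.+1 | (k < K)%N) (proj_cdf u s k - proj_cdf u s' k) ^+ 2 <= (s - s') ^+ 2.
Proof.
case=> u_ge0 u_sum1; under eq_bigr do rewrite /proj_cdf -sumrB.
under eq_bigr do under eq_bigr do rewrite -mulrBr.
apply: (sum_sqr_mixture_le (X := fun (l : 'I_K.+1) (k : 'I_K.+1) =>
  ramp k.+1 (s + l%:R) - ramp k.+1 (s' + l%:R))) => // l.
rewrite -(big_ord_widen K.+1
  (fun k => (ramp k.+1 (s + l%:R) - ramp k.+1 (s' + l%:R)) ^+ 2)) //.
by apply: le_trans (sum_sqr_rampB_le _ _ _) _; rewrite opprD addrACA subrr addr0.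
Qed.

End ShiftedProjection.

Lemma cramer_le (R : rcfType) d (Delta c : R) (u v : 'I_d -> R) :
  0 <= Delta -> 0 <= c ->
  (cramer Delta u v <= c)
    = (Delta * \sum_(k < d | (k < d.-1)%N) (cdf u k - cdf v k) ^+ 2 <= c ^+ 2).
Proof.
move=> Delta_ge0 c_ge0.
by rewrite -[c in LHS]ger0_norm // -sqrtr_sqr ler_sqrt // sqr_ge0.
Qed.

Section BellmanOperator.
Variables (R : rcfType) (m n : nat) (P : 'M[R]_m).
Variables (rv rw : 'I_m -> 'I_m -> 'I_n -> R) (theta1 Delta : R).
Hypothesis Delta_gt0 : 0 < Delta.
Hypothesis P_ge0 : forall i j, 0 <= P i j.
Hypothesis P_sum1 : forall i, \sum_(j < m) P i j = 1.
Hypothesis rw_ge0 : forall i j a, 0 <= rw i j a.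
Hypothesis rw_sum1 : forall i j, \sum_(a < n) rw i j a = 1.

Let weight i (ja : 'I_m * 'I_n) := P i ja.1 * rw i ja.1 ja.2.

Lemma weight_ge0 i ja : 0 <= weight i ja.
Proof. exact: mulr_ge0. Qed.

Lemma weight_sum1 i : \sum_ja weight i ja = 1.
Proof.
rewrite -(pair_bigA _ (fun j a => P i j * rw i j a)) /= -[RHS](P_sum1 i).
by apply: eq_bigr => j _; rewrite -mulr_sumr rw_sum1 mulr1.
Qed.

Lemma cdf_Gop K g (p : 'I_m -> 'I_K.+1 -> R) i (k : 'I_K.+1) : (k < K)%N ->
  cdf (Gop P rv rw theta1 Delta g p i) k
    = \sum_ja weight i ja * proj_cdf (p ja.1) ((rv i ja.1 ja.2 - g) / Delta) k.
Proof.
move=> lt_kK.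
rewrite -(pair_bigA _ (fun j a =>
  weight i (j, a) * proj_cdf (p j) ((rv i j a - g) / Delta) k)).
rewrite /cdf /Gop [LHS]exchange_big; apply: eq_bigr => j _ /=.
under [RHS]eq_bigr do rewrite /weight /= -mulrA.
rewrite -!mulr_sumr; congr (_ * _); rewrite [LHS]exchange_big; apply: eq_bigr => a _.
rewrite -mulr_sumr; congr (_ * _); rewrite [LHS]exchange_big; apply: eq_bigr => l _.
rewrite -mulr_sumr; congr (_ * _).
have := cdf_cproj theta1 Delta_gt0 (rv i j a - g + th theta1 Delta l) lt_kK.
rewrite /cdf => ->.
by congr ramp; rewrite /th; field; exact: lt0r_neq0.
Qed.

Lemma sqdist_Gop_le K g g' (p q : 'I_m -> 'I_K.+1 -> R) i (A : R) :
  (forall j, simplex (p j)) -> (forall j, simplex (q j)) -> 0 <= A ->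
  (forall j, \sum_(k < K.+1 | (k < K)%N) (cdf (p j) k - cdf (q j) k) ^+ 2 <= A ^+ 2) ->
  \sum_(k < K.+1 | (k < K)%N)
     (cdf (Gop P rv rw theta1 Delta g p i) k - cdf (Gop P rv rw theta1 Delta g' q i) k) ^+ 2
    <= (A + `|g - g'| / Delta) ^+ 2.
Proof.
move=> p_simplex q_simplex A_ge0 pq_le.
pose s g ja := (rv i ja.1 ja.2 - g) / Delta.
pose D_p ja k := proj_cdf (p ja.1) (s g ja) k - proj_cdf (q ja.1) (s g ja) k.
pose D_g ja k := proj_cdf (q ja.1) (s g ja) k - proj_cdf (q ja.1) (s g' ja) k.
have cdf_GopB (k : 'I_K.+1) : (k < K)%N ->
    cdf (Gop P rv rw theta1 Delta g p i) k - cdf (Gop P rv rw theta1 Delta g' q i) k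
    = \sum_ja weight i ja * D_p ja k + \sum_ja weight i ja * D_g ja k.
  move=> lt_kK; rewrite !cdf_Gop // -sumrB -big_split /=.
  by apply: eq_bigr => ja _; rewrite /D_p /D_g; ring.
under eq_bigr => k lt_kK do rewrite cdf_GopB //.
apply: minkowski_sqr => //.
- by rewrite divr_ge0 // ltW.
- apply: sum_sqr_mixture_le (weight_ge0 i) (weight_sum1 i) _ => ja.
  apply: le_trans (pq_le ja.1); apply: proj_cdf_sqdist_le.
  by case: (p_simplex ja.1) => _ ->; case: (q_simplex ja.1) => _ ->.
- apply: sum_sqr_mixture_le (weight_ge0 i) (weight_sum1 i) _ => ja.
  apply: le_trans (proj_cdf_shift_sqdist_le _ _ (q_simplex ja.1)) _.
  have -> : s g ja - s g' ja = (g' - g) / Delta by rewrite /s; field; exact: lt0r_neq0.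
  by rewrite !expr_div_n real_normK ?num_real // -sqrrN opprB.
Qed.

Lemma cramer_Gop_le d g g' (p q : 'I_m -> 'I_d -> R) i (M : R) :
  (forall j, simplex (p j)) -> (forall j, simplex (q j)) -> 0 <= M ->
  (forall j, cramer Delta (p j) (q j) <= M) ->
  cramer Delta (Gop P rv rw theta1 Delta g p i) (Gop P rv rw theta1 Delta g' q i)
    <= M + `|g - g'| / Num.sqrt Delta.
Proof.
move=> p_simplex q_simplex M_ge0 pq_le; have Delta_ge0 := ltW Delta_gt0.
have sqrtD_gt0 : 0 < Num.sqrt Delta by rewrite sqrtr_gt0.
have rhs_ge0 : 0 <= M + `|g - g'| / Num.sqrt Delta by rewrite addr_ge0 // divr_ge0 // ltW.
case: d p q p_simplex q_simplex pq_le => [|K] p q p_simplex q_simplex pq_le.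
  by rewrite /cramer big_ord0 mulr0 sqrtr0.
have rescale : (M + `|g - g'| / Num.sqrt Delta) ^+ 2
    = Delta * (M / Num.sqrt Delta + `|g - g'| / Delta) ^+ 2.
  move: sqrtD_gt0 (sqr_sqrtr Delta_ge0); set r := Num.sqrt Delta => r_gt0 <-.
  by field; exact: lt0r_neq0 r_gt0.
rewrite cramer_le // rescale ler_wpM2l //; apply: sqdist_Gop_le => //.
  by rewrite divr_ge0 // sqrtr_ge0.
move=> j; have := pq_le j; rewrite cramer_le //= => sqdist_le.
by rewrite expr_div_n sqr_sqrtr // ler_pdivlMr // mulrC.
Qed.

End BellmanOperator.

Theorem lemma7 (R : rcfType) (m d n : nat) (P : 'M[R]_m)
  (rv rw : 'I_m -> 'I_m -> 'I_n -> R) (theta1 Delta : R)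
  (hDelta : 0 < Delta)
  (hP0 : forall i j, 0 <= P i j)
  (hP1 : forall i, \sum_(j < m) P i j = 1)
  (hrv : forall i j a, 0 <= rv i j a <= 1)
  (hrw0 : forall i j a, 0 <= rw i j a)
  (hrw1 : forall i j, \sum_(a < n) rw i j a = 1)
  (g g' : R) (p q : 'I_m -> 'I_d -> R)
  (hp : forall i, simplex (p i)) (hq : forall i, simplex (q i)) :
  cramer_inf Delta (Gop P rv rw theta1 Delta g p) (Gop P rv rw theta1 Delta g' q)
  <= cramer_inf Delta p q + `|g - g'| / Num.sqrt Delta.
Proof.
have M_ge0 : 0 <= cramer_inf Delta p q by exact: bigmax_ge_id.
apply: bigmax_le => [|i _]; first by rewrite addr_ge0 // divr_ge0 // sqrtr_ge0.
apply: cramer_Gop_le => // j.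
exact: le_bigmax.
Qed.
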